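(* Let $S\subset[0,\infty)$ with $0\in S$, and let $f\colon S\to[0,\infty)$ be a right-continuous decreasing function with $DP(\overline{f})\subset S$. Let $a,b\in S$ with $a<b$. Then: (1) If $0\leq\lambda<f(a)-f(b-)$, then for every $\mu>0$ there exists $c\in[a,b)\cap S$ with $\lambda<f(a)-f(c)$ and $f(a)-f(c-)<\lambda+\mu$. (2) For every $\varepsilon>0$ there exists a finite subset $F'=\{a=x'_0<x'_1<\cdots<x'_k=b\}\subset S$ such that $\max_{1\leq i\leq k}\{f(x'_{i-1})-f(x'_i-)\}<\varepsilon$.
   Context: For $S\subset[0,\infty)$ with $0\in S$, a function on $S$ is right-continuous if it is right-continuous for the relative topology of $S$. For a right-continuous decreasing $f\colon S\to[0,\infty)$ and $x\in\overline{S}$ (closure in $\mathbb{R}$), set $f(x+):=\sup\{f(y)\mid y\in(x,\infty)\cap S\}$ whenever $(x,\infty)\cap S\neq\emptyset$, and $f(x-):=\inf\{f(y)\mid y\in[0,x)\cap S\}$ if $x\neq0$, $f(0-):=f(0)$. Define $\overline{f}\colon\overline{S}\to[0,\infty)$ by $\overline{f}(x)=f(x)$ if $x\in S$, $\overline{f}(x)=f(x+)$ if $x\in\overline{S}\setminus S$ is a right accumulation point of $S$, and $\overline{f}(x)=f(x-)$ otherwise. With $\overline{f}(x-)$ defined by the same formula applied to $\overline{f}$ on $\overline{S}$, the set of left-jump points is $DP(\overline{f}):=\{x\in\overline{S}\setminus\{0\}\mid \overline{f}(x-)>\overline{f}(x)\}$. *)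

From Stdlib Require Import Reals Lra ClassicalEpsilon.
From Coquelicot Require Import Coquelicot.
Open Scope R_scope.

Definition closureR (S : R -> Prop) (x : R) : Prop :=
  forall eps, 0 < eps -> exists y, S y /\ Rabs (y - x) < eps.

Definition right_acc (S : R -> Prop) (x : R) : Prop :=
  forall eps, 0 < eps -> exists y, S y /\ x < y < x + eps.

Definition decreasing_on (S : R -> Prop) (f : R -> R) : Prop :=
  forall x y, S x -> S y -> x <= y -> f y <= f x.

Definition right_continuous_on (S : R -> Prop) (f : R -> R) : Prop :=
  forall x, S x -> forall eps, 0 < eps ->
    exists delta, 0 < delta /\
      forall y, S y -> x <= y < x + delta -> Rabs (f y - f x) < eps.

Definition right_lim (S : R -> Prop) (f : R -> R) (x : R) : R :=
  real (Lub_Rbar (fun r => exists y, S y /\ x < y /\ r = f y)).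

Definition left_lim (S : R -> Prop) (f : R -> R) (x : R) : R :=
  if Req_EM_T x 0 then f 0
  else real (Glb_Rbar (fun r => exists y, S y /\ 0 <= y < x /\ r = f y)).

(* the extension \overline{f} of f to the closure of S *)
Definition fbar (S : R -> Prop) (f : R -> R) (x : R) : R :=
  if excluded_middle_informative (S x) then f x
  else if excluded_middle_informative (right_acc S x) then right_lim S f x
  else left_lim S f x.

Definition DP (S : R -> Prop) (f : R -> R) (x : R) : Prop :=
  closureR S x /\ x <> 0 /\
  left_lim (closureR S) (fbar S f) x > fbar S f x.

(* Fix a level m with f(b-) < m <= f(a) and let c be the infimum of the sublevel set
   {y in S | f y < m}; then f >= m on S to the left of c.  Either c itself lies in the
   sublevel set, or f(c+) >= m: when c is in S by right-continuity, and when c is not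
   in S because c is then no left-jump point of fbar, so f(c+) = fbar(c) >= fbar(c-) >= m.
   In both cases a point t of the sublevel set just right of c has f(t) < m and f(t-)
   barely below m, which is (1) for m = f(a) - lambda.  Iterating (1) with
   lambda = mu = eps/2 lowers f by more than eps/2 at each step while each step has
   jump f(x_{i-1}) - f(x_i-) < eps, so b is reached after finitely many steps: (2). *)

From Stdlib Require Import Reals Lra Lia Classical ClassicalEpsilon.
From Coquelicot Require Import Coquelicot.
Open Scope R_scope.

Section BoundedBelow.

Variables (E : R -> Prop) (e0 m : R).
Hypotheses (HE : E e0) (Hm : forall e, E e -> m <= e).

Lemma is_glb_Rbar_real : is_glb_Rbar E (real (Glb_Rbar E)).
Proof.
  pose proof (Glb_Rbar_correct E) as Hglb.
  assert (Hle : Rbar_le (Glb_Rbar E) e0) by exact (proj1 Hglb e0 HE).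
  assert (Hge : Rbar_le m (Glb_Rbar E)) by exact (proj2 Hglb m Hm).
  destruct (Glb_Rbar E); simpl in *; tauto.
Qed.

Lemma real_Glb_Rbar_le e : E e -> real (Glb_Rbar E) <= e.
Proof. exact (proj1 is_glb_Rbar_real e). Qed.

Lemma real_Glb_Rbar_ge : m <= real (Glb_Rbar E).
Proof. exact (proj2 is_glb_Rbar_real m Hm). Qed.

Lemma real_Glb_Rbar_approx r : real (Glb_Rbar E) < r -> exists e, E e /\ e < r.
Proof.
  intros Hr. apply NNPP. intros Hno.
  assert (r <= real (Glb_Rbar E)); [|lra].
  apply (proj2 is_glb_Rbar_real r). intros e He. simpl.
  apply Rnot_lt_le. intros Her. apply Hno. now exists e.
Qed.

End BoundedBelow.

Section BoundedAbove.

Variables (E : R -> Prop) (e0 M : R).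
Hypotheses (HE : E e0) (HM : forall e, E e -> e <= M).

Lemma is_lub_Rbar_real : is_lub_Rbar E (real (Lub_Rbar E)).
Proof.
  pose proof (Lub_Rbar_correct E) as Hlub.
  assert (Hge : Rbar_le e0 (Lub_Rbar E)) by exact (proj1 Hlub e0 HE).
  assert (Hle : Rbar_le (Lub_Rbar E) M) by exact (proj2 Hlub M HM).
  destruct (Lub_Rbar E); simpl in *; tauto.
Qed.

Lemma real_Lub_Rbar_ge e : E e -> e <= real (Lub_Rbar E).
Proof. exact (proj1 is_lub_Rbar_real e). Qed.

Lemma real_Lub_Rbar_approx r : r < real (Lub_Rbar E) -> exists e, E e /\ r < e.
Proof.
  intros Hr. apply NNPP. intros Hno.
  assert (real (Lub_Rbar E) <= r); [|lra].
  apply (proj2 is_lub_Rbar_real r). intros e He. simpl.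
  apply Rnot_lt_le. intros Her. apply Hno. now exists e.
Qed.

End BoundedAbove.

Lemma left_lim_ge (S : R -> Prop) (f : R -> R) x m :
  S 0 -> 0 < x -> (forall y, S y -> 0 <= y < x -> m <= f y) -> m <= left_lim S f x.
Proof.
  intros HS0 Hx Hm. unfold left_lim. destruct (Req_EM_T x 0); [lra|].
  apply (real_Glb_Rbar_ge _ (f 0)).
  - exists 0. repeat split; auto; lra.
  - intros e (y & Hy & Hyx & ->). auto.
Qed.

Definition jump_partition (S : R -> Prop) (f : R -> R) (eps a b : R)
  (k : nat) (x : nat -> R) : Prop :=
  x 0%nat = a /\ x k = b /\
  (forall i, (i < k)%nat -> x i < x (i + 1)%nat) /\
  (forall i, (i <= k)%nat -> S (x i)) /\
  (forall i, (1 <= i <= k)%nat -> f (x (i - 1)%nat) - left_lim S f (x i) < eps).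

Lemma jump_partition_single (S : R -> Prop) (f : R -> R) eps a b :
  S a -> S b -> a < b -> f a - left_lim S f b < eps ->
  jump_partition S f eps a b 1 (fun i => match i with 0%nat => a | _ => b end).
Proof.
  intros Ha Hb Hab Hjump. repeat split.
  - intros i Hi. replace i with 0%nat by lia. exact Hab.
  - intros [|i] _; assumption.
  - intros i Hi. replace i with 1%nat by lia. exact Hjump.
Qed.

Lemma jump_partition_cons (S : R -> Prop) (f : R -> R) eps a c b k x :
  S a -> a < c -> f a - left_lim S f c < eps -> jump_partition S f eps c b k x ->
  jump_partition S f eps a b (Datatypes.S k)
    (fun i => match i with 0%nat => a | Datatypes.S j => x j end).
Proof.
  intros Ha Hac Hjump (Hx0 & Hxk & Hinc & HxS & Hjumps). repeat split.
  - exact Hxk.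
  - intros [|i] Hi; simpl.
    + now rewrite Hx0.
    + apply Hinc. lia.
  - intros [|i] Hi; [exact Ha|]. apply HxS. lia.
  - intros [|[|i]] Hi; [lia|simpl; now rewrite Hx0|].
    replace (Datatypes.S (Datatypes.S i) - 1)%nat with (Datatypes.S i) by lia.
    specialize (Hjumps (Datatypes.S i) ltac:(lia)).
    now replace (Datatypes.S i - 1)%nat with i in Hjumps by lia.
Qed.

Section Lemma2p4.

Variables (S : R -> Prop) (f : R -> R).
Hypotheses (HS0 : S 0) (HSpos : forall x, S x -> 0 <= x)
  (Hdec : decreasing_on S f) (Hrc : right_continuous_on S f)
  (HDP : forall x, DP S f x -> S x).

Lemma le_left_lim x : S x -> 0 < x -> f x <= left_lim S f x.
Proof.
  intros Hx Hx0. apply left_lim_ge; auto.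
  intros y Hy Hyx. apply Hdec; auto; lra.
Qed.

Let right_values x r := exists y, S y /\ x < y /\ r = f y.

Lemma right_values_le_f0 x r : right_values x r -> 0 <= x -> r <= f 0.
Proof. intros (y & Hy & Hxy & ->) Hx. apply Hdec; auto; lra. Qed.

Lemma le_right_lim x y : 0 <= x -> S y -> x < y -> f y <= right_lim S f x.
Proof.
  intros Hx Hy Hxy. apply (real_Lub_Rbar_ge _ (f y) (f 0)).
  - now exists y.
  - intros r Hr. now apply (right_values_le_f0 x).
  - now exists y.
Qed.

Lemma right_lim_approx x y r : 0 <= x -> S y -> x < y -> r < right_lim S f x ->
  exists z, S z /\ x < z /\ r < f z.
Proof.
  intros Hx Hy Hxy Hr.
  destruct (real_Lub_Rbar_approx (right_values x) (f y) (f 0)) with r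
    as [e [(z & Hz & Hxz & ->) Hre]]; auto.
  - now exists y.
  - intros e He. now apply (right_values_le_f0 x).
  - now exists z.
Qed.

Lemma fbar_ge c m : (forall y, S y -> y < c -> m <= f y) ->
  forall y, 0 <= y < c -> m <= fbar S f y.
Proof.
  intros Hbelow y Hy. unfold fbar.
  destruct (excluded_middle_informative (S y)) as [HSy|HSy]; [apply Hbelow; auto; lra|].
  destruct (excluded_middle_informative (right_acc S y)) as [Hacc|Hacc].
  - destruct (Hacc (c - y)) as (w & Hw & Hyw); [lra|].
    apply Rle_trans with (f w); [apply Hbelow; auto; lra|].
    apply le_right_lim; auto; lra.
  - assert (Hy0 : y <> 0) by (intros ->; contradiction).
    apply left_lim_ge; auto; [lra|].
    intros z Hz Hzy. apply Hbelow; auto; lra.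
Qed.

Lemma right_lim_ge c m : 0 <= c -> ~ S c -> right_acc S c ->
  (forall y, S y -> y < c -> m <= f y) -> m <= right_lim S f c.
Proof.
  intros Hc HSc Hacc Hbelow.
  assert (Hc0 : c <> 0) by (intros ->; contradiction).
  assert (Hcl : closureR S c).
  { intros eps Heps. destruct (Hacc eps Heps) as (y & Hy & Hcy).
    exists y. split; auto. rewrite Rabs_right; lra. }
  assert (Hleft : m <= left_lim (closureR S) (fbar S f) c).
  { apply left_lim_ge; [|lra|].
    - intros eps Heps. exists 0. split; auto. rewrite Rminus_0_r, Rabs_R0. lra.
    - intros y _ Hy. now apply (fbar_ge c). }
  assert (Hjump : left_lim (closureR S) (fbar S f) c <= fbar S f c).
  { apply Rnot_lt_le. intros Hlt. apply HSc, HDP. repeat split; auto. }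
  assert (Hfbar : fbar S f c = right_lim S f c).
  { unfold fbar.
    destruct (excluded_middle_informative (S c)); [contradiction|].
    destruct (excluded_middle_informative (right_acc S c)); [reflexivity|contradiction]. }
  lra.
Qed.

Lemma eventually_above_right c m delta : 0 <= c -> 0 < delta -> right_acc S c ->
  (S c -> m <= f c) -> (forall y, S y -> y < c -> m <= f y) ->
  exists d, c < d /\ forall y, S y -> c < y < d -> m - delta < f y.
Proof.
  intros Hc Hdelta Hacc Hfc Hbelow.
  destruct (classic (S c)) as [HSc|HSc].
  - destruct (Hrc c HSc delta Hdelta) as (r & Hr & Hnear).
    exists (c + r). split; [lra|]. intros y Hy Hcy.
    destruct (Rabs_def2 _ _ (Hnear y Hy ltac:(lra))). specialize (Hfc HSc). lra.
  - destruct (Hacc 1) as (w & Hw & Hcw); [lra|].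
    pose proof (right_lim_ge c m Hc HSc Hacc Hbelow).
    destruct (right_lim_approx c w (m - delta)) as (z & Hz & Hcz & Hmz); auto; try lra.
    exists z. split; auto. intros y Hy Hcy.
    assert (f z <= f y) by (apply Hdec; auto; lra). lra.
Qed.

Section Crossing.

Variables (a b m : R).
Hypotheses (Ha : S a) (Hb : S b) (Hab : a < b)
  (Hma : m <= f a) (Hmb : left_lim S f b < m).

Let sublevel y := S y /\ f y < m.
Let c := real (Glb_Rbar sublevel).

Lemma sublevel_gt y : sublevel y -> a < y.
Proof.
  intros [Hy Hfy]. apply Rnot_le_lt. intros Hya.
  assert (f a <= f y) by (apply Hdec; auto). lra.
Qed.

Lemma sublevel_b : sublevel b.
Proof.
  split; auto. pose proof (HSpos a Ha).
  pose proof (le_left_lim b Hb ltac:(lra)). lra.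
Qed.

Lemma crossing_le y : sublevel y -> c <= y.
Proof.
  apply (real_Glb_Rbar_le _ b a sublevel_b).
  intros y' Hy'. apply Rlt_le, sublevel_gt, Hy'.
Qed.

Lemma crossing_ge : a <= c.
Proof.
  apply (real_Glb_Rbar_ge _ b a sublevel_b).
  intros y' Hy'. apply Rlt_le, sublevel_gt, Hy'.
Qed.

Lemma crossing_approx r : c < r -> exists y, sublevel y /\ y < r.
Proof.
  apply (real_Glb_Rbar_approx _ b a sublevel_b).
  intros y' Hy'. apply Rlt_le, sublevel_gt, Hy'.
Qed.

Lemma ge_before_crossing y : S y -> y < c -> m <= f y.
Proof.
  intros Hy Hyc. apply Rnot_lt_le. intros Hfy.
  pose proof (crossing_le y (conj Hy Hfy)). lra.
Qed.

Lemma crossing_right_acc : ~ sublevel c -> right_acc S c.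
Proof.
  intros Hc eps Heps. destruct (crossing_approx (c + eps)) as (y & Hy & Hyc); [lra|].
  exists y. split; [apply Hy|]. split; [|lra].
  destruct (crossing_le y Hy) as [Hcy|Hcy]; [assumption|]. rewrite <- Hcy in Hy. contradiction.
Qed.

Lemma sublevel_point_near_crossing delta : 0 < delta ->
  exists t, S t /\ a < t < b /\ f t < m /\ m - delta <= left_lim S f t.
Proof.
  intros Hdelta. pose proof crossing_ge as Hac. pose proof (HSpos a Ha).
  pose proof (crossing_le b sublevel_b) as Hcb.
  destruct (classic (sublevel c)) as [Hc|Hc].
  - pose proof (sublevel_gt c Hc) as Hac'.
    assert (Hleft : m <= left_lim S f c).
    { apply left_lim_ge; auto; [lra|].
      intros y Hy Hyc. apply ge_before_crossing; auto; lra. }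
    exists c. destruct Hc as [HSc Hfc]. repeat split; auto; try lra.
    destruct Hcb as [|Hcb]; [assumption|]. rewrite Hcb in Hleft. lra.
  - assert (Hfc : S c -> m <= f c).
    { intros HSc. apply Rnot_lt_le. intros Hfc. now apply Hc. }
    destruct (eventually_above_right c m delta) as (d & Hcd & Habove); auto; try lra.
    { now apply crossing_right_acc. }
    { apply ge_before_crossing. }
    destruct (crossing_approx (Rmin d b)) as (t & [Ht Hft] & Htdb).
    { apply Rmin_glb_lt; auto. destruct Hcb as [|Hcb]; [assumption|].
      exfalso. apply Hc. rewrite Hcb. apply sublevel_b. }
    pose proof (Rmin_l d b). pose proof (Rmin_r d b).
    assert (Hct : c < t).
    { destruct (crossing_le t (conj Ht Hft)) as [|Htc]; [assumption|].
      exfalso. apply Hc. rewrite Htc. now split. }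
    exists t. repeat split; auto; try lra.
    apply left_lim_ge; auto; [lra|]. intros y Hy Hyt.
    destruct (Rtotal_order y c) as [Hyc|[->|Hyc]].
    + pose proof (ge_before_crossing y Hy Hyc). lra.
    + pose proof (Hfc Hy). lra.
    + apply Rlt_le, Habove; auto; lra.
Qed.

End Crossing.

Lemma exists_intermediate_drop a b : S a -> S b -> a < b ->
  forall lam, 0 <= lam < f a - left_lim S f b -> forall mu, 0 < mu ->
  exists c, S c /\ a < c < b /\ lam < f a - f c /\ f a - left_lim S f c < lam + mu.
Proof.
  intros Ha Hb Hab lam Hlam mu Hmu.
  destruct (sublevel_point_near_crossing a b (f a - lam) Ha Hb Hab) with (mu / 2)
    as (c & Hc & Hac & Hfc & Hleft); try lra.
  exists c. repeat split; auto; lra.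
Qed.

Lemma jump_partition_of_bound eps b : 0 < eps -> S b ->
  forall n a, S a -> a < b -> f a - left_lim S f b <= INR n * (eps / 2) ->
  exists k x, jump_partition S f eps a b k x.
Proof.
  intros Heps Hb n. induction n as [|n IHn]; intros a Ha Hab Hbound.
  all: destruct (Rlt_or_le (f a - left_lim S f b) eps) as [Hsmall|Hlarge];
    [eexists _, _; now apply jump_partition_single|].
  - simpl in Hbound. lra.
  - destruct (exists_intermediate_drop a b Ha Hb Hab (eps / 2)) with (mu := eps / 2)
      as (c & Hc & [Hac Hcb] & Hdrop & Hjump); try lra.
    rewrite S_INR in Hbound.
    destruct (IHn c Hc Hcb) as (k & x & Hx); [lra|].
    eexists _, _. apply (jump_partition_cons _ _ _ a c b k x); [exact Ha|lra|lra|exact Hx].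
Qed.

End Lemma2p4.

Theorem lemma2p4 (S : R -> Prop) (f : R -> R)
  (HS0 : S 0) (HSpos : forall x, S x -> 0 <= x)
  (Hfpos : forall x, S x -> 0 <= f x)
  (Hdec : decreasing_on S f) (Hrc : right_continuous_on S f)
  (HDP : forall x, DP S f x -> S x)
  (a b : R) (Ha : S a) (Hb : S b) (Hab : a < b) :
  (forall lam, 0 <= lam < f a - left_lim S f b ->
     forall mu, 0 < mu ->
       exists c, S c /\ a <= c < b /\ lam < f a - f c /\
                 f a - left_lim S f c < lam + mu)
  /\
  (forall eps, 0 < eps ->
     exists (k : nat) (x : nat -> R),
       x 0%nat = a /\ x k = b /\
       (forall i, (i < k)%nat -> x i < x (i + 1)%nat) /\
       (forall i, (i <= k)%nat -> S (x i)) /\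
       (forall i, (1 <= i <= k)%nat -> f (x (i - 1)%nat) - left_lim S f (x i) < eps)).
Proof.
  split.
  - intros lam Hlam mu Hmu.
    destruct (exists_intermediate_drop S f HS0 HSpos Hdec Hrc HDP a b Ha Hb Hab lam Hlam mu Hmu)
      as (c & Hc & Hacb & Hdrop & Hjump).
    exists c. repeat split; auto; lra.
  - intros eps Heps.
    destruct (INR_unbounded ((f a - left_lim S f b) / (eps / 2))) as [n Hn].
    apply (jump_partition_of_bound S f HS0 HSpos Hdec Hrc HDP eps b Heps Hb n a Ha Hab).
    replace (f a - left_lim S f b) with ((f a - left_lim S f b) / (eps / 2) * (eps / 2))
      by (field; lra).
    apply Rmult_le_compat_r; lra.
Qed.
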